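(* Let $\mathcal C$ be the epireflective subcategory of $\mathbf{Top}$ defined by any one of the separation axioms $T_0$, $T_1$, $T_2$, functionally Hausdorff, and let $\mathbf{TopMlt}$ be the category of topological Mal'tsev spaces. Then $\mathrm{r}_{\mathcal C}(\mathbf{TopMlt})$ is an epireflective subcategory of $\mathbf{TopMlt}$; in particular, for every topological Mal'tsev space $(X,\Phi)$, the reflection $\mathrm{r}_{\mathcal C}X$ is a topological Mal'tsev space with the operation $\mathrm{r}_{\mathcal C}(\Phi)$ determined by $\mathrm{r}_{\mathcal C}(\Phi)(\mathrm{r}_{(X,\mathcal C)}(x),\mathrm{r}_{(X,\mathcal C)}(y),\mathrm{r}_{(X,\mathcal C)}(z))=\mathrm{r}_{(X,\mathcal C)}(\Phi(x,y,z))$.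
   Context: A Mal'tsev operation on a space $X$ is a map $\Phi\colon X^3\to X$ with $\Phi(x,x,y)=\Phi(y,x,x)=y$ for all $x,y$; a topological Mal'tsev space is a space with a continuous Mal'tsev operation, and morphisms in $\mathbf{TopMlt}$ are continuous maps preserving the operation. For an epireflective subcategory $\mathcal C$ of $\mathbf{Top}$ (full, isomorphism-closed, closed under products and subspaces), $\mathrm{r}_{\mathcal C}X$ is the reflection of $X$ with universal continuous surjection $\mathrm{r}_{(X,\mathcal C)}\colon X\to\mathrm{r}_{\mathcal C}X$. A space is functionally Hausdorff if distinct points are separated by a real-valued continuous function. *)

From HB Require Import structures.
From mathcomp Require Import all_boot all_order all_algebra.
From mathcomp Require Import all_classical all_reals topology.
From mathcomp Require Import Rstruct Rstruct_topology.
Set Implicit Arguments. Unset Strict Implicit. Unset Printing Implicit Defensive.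

Inductive sep_axiom := T0 | T1 | T2 | FunHausdorff.

Definition functionally_hausdorff (X : topologicalType) : Prop :=
  forall x y : X, x <> y ->
    exists f : X -> Rdefinitions.R, continuous f /\ f x <> f y.

Definition in_C (s : sep_axiom) (X : topologicalType) : Prop :=
  match s with
  | T0 => kolmogorov_space X
  | T1 => accessible_space X
  | T2 => hausdorff_space X
  | FunHausdorff => functionally_hausdorff X
  end.

Definition maltsev_op (X : Type) (P : X -> X -> X -> X) : Prop :=
  forall x y : X, P x x y = y /\ P y x x = y.

Definition top_maltsev (X : topologicalType) (P : X -> X -> X -> X) : Prop :=
  maltsev_op P /\ continuous (fun p : X * X * X => P p.1.1 p.1.2 p.2).

Definition maltsev_morph (X Y : topologicalType) (P : X -> X -> X -> X)
  (Q : Y -> Y -> Y -> Y) (f : X -> Y) : Prop :=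
  continuous f /\ forall x y z, f (P x y z) = Q (f x) (f y) (f z).

Definition top_reflection (s : sep_axiom) (X R : topologicalType) (r : X -> R)
  : Prop :=
  [/\ in_C s R, continuous r, (forall y : R, exists x, r x = y) &
      forall (Y : topologicalType) (f : X -> Y), in_C s Y -> continuous f ->
        exists! g : R -> Y, continuous g /\ (forall x, g (r x) = f x)].

Definition maltsev_reflection (s : sep_axiom) (X R : topologicalType)
  (P : X -> X -> X -> X) (Q : R -> R -> R -> R) (r : X -> R) : Prop :=
  [/\ in_C s R, top_maltsev Q, maltsev_morph P Q r &
      forall (Y : topologicalType) (PY : Y -> Y -> Y -> Y) (f : X -> Y),
        in_C s Y -> top_maltsev PY -> maltsev_morph P PY f ->
        exists! g : R -> Y, maltsev_morph Q PY g /\ (forall x, g (r x) = f x)].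

From HB Require Import structures.
From mathcomp Require Import all_boot all_order all_algebra.
From mathcomp Require Import all_classical all_reals topology.
From mathcomp Require Import Rstruct_topology.
Set Implicit Arguments.
Unset Strict Implicit.
Unset Printing Implicit Defensive.

(* The reflection r : X -> R is a quotient map: the topology on R coinduced
   by r is finer than that of R and is still in C, so the universal property
   yields a continuous identity from R to it.  Every continuous self-map f of
   X, in particular every partial map of P, respects the fibres of r (as
   r \o f factors through r), hence P descends to Q.  The Mal'tsev identities
   make r an open map: if r t = r u with u in an open U, then P a t u lies in
   U for a near t, while r (P a t u) = r (P a u u) = r a.  So r x r x r is an
   open surjection, which makes Q continuous, and the universal property of
   (R, Q) is that of r. *)

Local Open Scope classical_set_scope.

Definition open_map (S T : topologicalType) (f : S -> T) : Prop :=
  forall U, open U -> open (f @` U).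

Lemma open_map_nbhs (S T : topologicalType) (f : S -> T) (x : S) (N : set S) :
  open_map f -> nbhs x N -> nbhs (f x) (f @` N).
Proof.
move=> fo; rewrite nbhsE => -[U [oU Ux] UN]; rewrite nbhsE.
exists (f @` U); first by split; [exact: fo | exists x].
exact: image_subset.
Qed.

Lemma open_map_pair (S1 S2 T1 T2 : topologicalType) (f : S1 -> T1)
    (g : S2 -> T2) :
  open_map f -> open_map g -> open_map (fun p => (f p.1, g p.2)).
Proof.
move=> fo go U oU; rewrite openE => _ [[a c] Uac <-].
have [[A C] /= [nA nC] ACU] := oU _ Uac.
exists (f @` A, g @` C).
  by split=> /=; [exact: open_map_nbhs nA | exact: open_map_nbhs nC].
by case=> _ _ /= [[x Ax <-] [y Cy <-]]; exists (x, y) => //; exact: ACU.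
Qed.

Lemma continuous_through_open_surj (S T U : topologicalType) (h : S -> T)
    (g : T -> U) :
  open_map h -> (forall y, exists x, h x = y) -> continuous (g \o h) ->
  continuous g.
Proof.
move=> ho hsurj ghc; apply/continuousP => W oW.
have himT : h @` setT = setT.
  by apply/seteqP; split => // y _; have [x <-] := hsurj y; exists x.
rewrite -(image_preimage (g @^-1` W) himT); apply: ho.
by move/continuousP: ghc; apply.
Qed.

Lemma in_C_continuous_inj (s : sep_axiom) (S T : topologicalType)
    (f : S -> T) :
  injective f -> continuous f -> in_C s T -> in_C s S.
Proof.
move=> finj fc; have neq_f x y : x != y -> f x != f y.
  by apply: contraNneq => /finj ->.
case: s => /=.
- move=> T0 x y /neq_f /T0 [A [[nA yA]|[nA xA]]]; exists (f @^-1` A).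
    by left; rewrite !inE in nA yA *; split => //; exact: fc.
  by right; rewrite !inE in nA xA *; split => //; exact: fc.
- move=> T1 x y /neq_f /T1 [A [oA xA yA]]; exists (f @^-1` A); split => //.
  by move/continuousP: fc; apply.
- move=> T2 p q cl; apply: finj; apply: T2 => A B nA nB.
  by have [z [Az Bz]] := cl _ _ (fc p A nA) (fc q B nB); exists (f z).
- move=> FH x y /eqP /neq_f /eqP /FH [g [gc gxy]].
  by exists (g \o f); split => // z; exact: continuous_comp (fc z) (gc (f z)).
Qed.

Section final_topology.
Context {X R : topologicalType} (r : X -> R).

Definition final_topology (_ : X -> R) : Type := R.
HB.instance Definition _ := Choice.on (final_topology r).

Program Definition final_topology_mixin :=
  @isOpenTopological.Build (final_topology r) (fun U => open (r @^-1` U))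
    _ _ _.
Next Obligation. by rewrite /= preimage_setT; exact: openT. Qed.
Next Obligation. by move=> ? ? ? ?; exact: openI. Qed.
Next Obligation. by move=> I f ofi; apply: bigcup_open => i _; exact: ofi. Qed.
HB.instance Definition _ := final_topology_mixin.

Lemma continuous_final_topology : continuous (r : X -> final_topology r).
Proof. by apply/continuousP. Qed.

Lemma continuous_final_topology_id :
  continuous r -> continuous (id : final_topology r -> R).
Proof.
by move=> rc; apply/continuousP => A oA; move/continuousP: rc; apply.
Qed.

End final_topology.

Definition kernel_congruence {X R : Type} (r : X -> R)
    (P : X -> X -> X -> X) : Prop :=
  forall x x' y y' z z', r x = r x' -> r y = r y' -> r z = r z' ->
    r (P x y z) = r (P x' y' z').

Lemma kernel_congruence_descends (X R : Type) (r : X -> R)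
    (P : X -> X -> X -> X) :
  (forall y, exists x, r x = y) -> kernel_congruence r P ->
  exists Q : R -> R -> R -> R, forall x y z, Q (r x) (r y) (r z) = r (P x y z).
Proof.
move=> rsurj rP; have [sec secK] := boolp.choice rsurj.
by exists (fun a b c => r (P (sec a) (sec b) (sec c))) => x y z; apply: rP.
Qed.

Lemma maltsev_op_descends (X R : Type) (r : X -> R) (P : X -> X -> X -> X)
    (Q : R -> R -> R -> R) :
  (forall y, exists x, r x = y) ->
  (forall x y z, Q (r x) (r y) (r z) = r (P x y z)) ->
  maltsev_op P -> maltsev_op Q.
Proof.
move=> rsurj Qr Pm a b; have [x <-] := rsurj a; have [y <-] := rsurj b.
by rewrite !Qr (Pm x y).1 (Pm x y).2.
Qed.

Lemma idfun_continuous (T : topologicalType) : continuous (@idfun T).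
Proof. by move=> x; exact: cvg_id. Qed.

Lemma continuous_op3 (X T : topologicalType) (P : X -> X -> X -> X)
    (a b c : T -> X) :
  continuous (fun p : X * X * X => P p.1.1 p.1.2 p.2) ->
  continuous a -> continuous b -> continuous c ->
  continuous (fun t => P (a t) (b t) (c t)).
Proof.
move=> Pc ac bc cc t.
apply: (cvg_comp (fun t => (a t, b t, c t)) _ _ (Pc (a t, b t, c t))).
exact: cvg_pair (cvg_pair (ac t) (bc t)) (cc t).
Qed.

Lemma continuous_op_descends (X R : topologicalType) (q : X -> R)
    (P : X -> X -> X -> X) (Q : R -> R -> R -> R) :
  open_map q -> (forall y, exists x, q x = y) -> continuous q ->
  (forall x y z, Q (q x) (q y) (q z) = q (P x y z)) ->
  continuous (fun p : X * X * X => P p.1.1 p.1.2 p.2) ->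
  continuous (fun p : R * R * R => Q p.1.1 p.1.2 p.2).
Proof.
move=> qo qsurj qc Qq Pc.
pose q3 (p : X * X * X) := (q p.1.1, q p.1.2, q p.2).
apply: (@continuous_through_open_surj _ _ _ q3).
- apply: (@open_map_pair _ _ _ _ (fun p : X * X => (q p.1, q p.2)) q) => //.
  exact: open_map_pair.
- case=> [[a b] c].
  have [x <-] := qsurj a; have [y <-] := qsurj b; have [z <-] := qsurj c.
  by exists (x, y, z).
- have -> : (fun p => Q p.1.1 p.1.2 p.2) \o q3 =
            q \o (fun p => P p.1.1 p.1.2 p.2).
    by apply/funext => -[[x y] z]; exact: Qq.
  by move=> p; exact: continuous_comp (Pc p) (qc _).
Qed.

Lemma maltsev_quotient_open (X R : topologicalType) (P : X -> X -> X -> X)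
    (q : X -> R) :
  top_maltsev P -> kernel_congruence q P ->
  (forall A, open (q @^-1` A) -> open A) -> open_map q.
Proof.
move=> [Pm Pc] qP qquot U oU; apply: qquot; rewrite openE => t [u Uu qut].
have : nbhs (P t t u) U by rewrite (Pm t u).1; exact: open_nbhs_nbhs.
move/(continuous_op3 Pc (@idfun_continuous X) (@cst_continuous X X t)
  (@cst_continuous X X u)) => near_t.
apply: (@filterS _ _ (nbhs_filter t) _ _ _ near_t) => a Ua.
exists (P a t u) => //.
by rewrite -{2}[a](Pm u a).2; apply: qP.
Qed.

Section reflection.
Context (s : sep_axiom) (X R : topologicalType) (r : X -> R).
Hypothesis refl : top_reflection s r.

Lemma reflection_quotient (A : set R) : open (r @^-1` A) -> open A.
Proof.
case: refl => RC rc rsurj runiv oA.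
have RC' : in_C s (final_topology r).
  by apply: in_C_continuous_inj (continuous_final_topology_id rc) RC.
have [g [[gc gr] _]] := runiv _ _ RC' (@continuous_final_topology _ _ r).
have gid a : g a = a by have [x <-] := rsurj a; rewrite gr.
move/continuousP: gc => /(_ (A : set (final_topology r)) oA).
by rewrite (_ : g @^-1` A = A) //; apply/funext => a /=; rewrite gid.
Qed.

Lemma reflection_respects_continuous (f : X -> X) : continuous f ->
  forall x x', r x = r x' -> r (f x) = r (f x').
Proof.
case: refl => RC rc _ runiv fc x x' rxx'.
have rfc : continuous (r \o f) := fun x => continuous_comp (fc x) (rc _).
have [g [[_ gr] _]] := runiv R (r \o f) RC rfc.
by rewrite -[r (f x)]gr -[r (f x')]gr rxx'.
Qed.

Lemma reflection_kernel_congruence (P : X -> X -> X -> X) :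
  continuous (fun p : X * X * X => P p.1.1 p.1.2 p.2) ->
  kernel_congruence r P.
Proof.
move=> Pc x x' y y' z z' rx ry rz.
have respects := reflection_respects_continuous.
have id_c := @idfun_continuous X; have cst := @cst_continuous X X.
rewrite (respects _ (continuous_op3 Pc id_c (cst y) (cst z)) _ _ rx).
rewrite (respects _ (continuous_op3 Pc (cst x') id_c (cst z)) _ _ ry).
exact: (respects _ (continuous_op3 Pc (cst x') (cst y') id_c) _ _ rz).
Qed.

End reflection.

Theorem theorem4p11 (s : sep_axiom) (X : topologicalType)
  (P : X -> X -> X -> X) (R : topologicalType) (r : X -> R) :
  top_maltsev P -> top_reflection s r ->
  exists Q : R -> R -> R -> R,
    (forall x y z, Q (r x) (r y) (r z) = r (P x y z)) /\
    maltsev_reflection s P Q r.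
Proof.
move=> [Pm Pc] refl; have [RC rc rsurj runiv] := refl.
have rP := reflection_kernel_congruence refl Pc.
have [Q Qr] := kernel_congruence_descends rsurj rP.
have ro : open_map r.
  exact: maltsev_quotient_open (conj Pm Pc) rP (reflection_quotient refl).
have Qm : top_maltsev Q.
  split; first exact: maltsev_op_descends rsurj Qr Pm.
  exact: continuous_op_descends ro rsurj rc Qr Pc.
exists Q; split => //; split => //; first by split => // x y z; rewrite Qr.
move=> Y PY f YC _ [fc fP]; have [g [[gc gr] gu]] := runiv Y f YC fc.
exists g; split; last by move=> g' [[g'c _] g'r]; apply: gu.
split => //; split => // a b c.
have [x <-] := rsurj a; have [y <-] := rsurj b; have [z <-] := rsurj c.
by rewrite Qr !gr fP.
Qed.
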